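(* Let $\{S_1,\dots,S_m\}$ be a system of contraction maps of $\mathbb R^n$ with $r_k=\operatorname{Lip}S_k$, $\mathbf r=(r_1,\dots,r_m)$, $\bar r=\max_k r_k$. For $t\in\mathbb R^n$ let $\mathcal S_t=\{S_1,\dots,S_{m-1},S_{m,t}\}$ with $S_{m,t}(x)=S_m(x)+t$, and let $K_t$ be its attractor. Let $1\le k<m$. If $r_k+r_m+\bar r<1$ and $s_{\mathbf r}<n/2$, then $S_k(K_t)\cap S_{m,t}(K_t)=\varnothing$ for Lebesgue almost all $t\in\mathbb R^n$.
   Context: The attractor of a system of contractions $\{T_1,\dots,T_m\}$ is the unique nonempty compact set $K$ with $K=\bigcup_k T_k(K)$. $s_{\mathbf r}$ is the unique solution $s$ of $r_1^s+\dots+r_m^s=1$. *)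

From Stdlib Require Import Reals Lra List.
From Stdlib Require Fin.
Open Scope R_scope.

Definition vec (n : nat) := Fin.t n -> R.

Fixpoint fsum (n : nat) : (Fin.t n -> R) -> R :=
  match n with
  | O => fun _ => 0
  | S p => fun f => f Fin.F1 + fsum p (fun i => f (Fin.FS i))
  end.

Fixpoint fprod (n : nat) : (Fin.t n -> R) -> R :=
  match n with
  | O => fun _ => 1
  | S p => fun f => f Fin.F1 * fprod p (fun i => f (Fin.FS i))
  end.

Definition vadd {n} (x y : vec n) : vec n := fun i => x i + y i.

Definition vnorm {n} (x : vec n) : R := sqrt (fsum n (fun i => x i * x i)).
Definition vdist {n} (x y : vec n) : R := vnorm (fun i => x i - y i).

Definition is_lip_const {n} (f : vec n -> vec n) (L : R) : Prop :=
  0 <= L /\ forall x y, vdist (f x) (f y) <= L * vdist x y.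
Definition lip_eq {n} (f : vec n -> vec n) (L : R) : Prop :=
  is_lip_const f L /\ forall L', is_lip_const f L' -> L <= L'.

Definition is_open {n} (U : vec n -> Prop) : Prop :=
  forall x, U x -> exists eps, 0 < eps /\ forall y, vdist x y < eps -> U y.
Definition is_compact {n} (K : vec n -> Prop) : Prop :=
  forall (I : Type) (U : I -> vec n -> Prop),
    (forall i, is_open (U i)) ->
    (forall x, K x -> exists i, U i x) ->
    exists l : list I, forall x, K x -> exists i, In i l /\ U i x.

Definition is_attractor {n} (T : nat -> vec n -> vec n) (m : nat) (K : vec n -> Prop) : Prop :=
  (exists x, K x) /\ is_compact K /\
  forall x, K x <-> exists k, (k < m)%nat /\ exists y, K y /\ x = T k y.

(* r^s with the convention 0^s = 0 (for r <= 0) *)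
Definition rpow (r s : R) : R := if Rlt_dec 0 r then Rpower r s else 0.

(* s is a solution of r_1^s + ... + r_m^s = 1 (such a solution is unique when it exists) *)
Definition sim_dim (r : nat -> R) (m : nat) (s : R) : Prop :=
  fold_right Rplus 0 (map (fun k => rpow (r k) s) (seq 0 m)) = 1.

Definition rmax (r : nat -> R) (m : nat) : R := fold_right Rmax 0 (map r (seq 0 m)).

Definition lebesgue_null {n} (E : vec n -> Prop) : Prop :=
  forall eps, 0 < eps ->
    exists a b : nat -> vec n,
      (forall j i, a j i <= b j i) /\
      (forall x, E x -> exists j, forall i, a j i <= x i <= b j i) /\
      (forall N, fold_right Rplus 0
          (map (fun j => fprod n (fun i => b j i - a j i)) (seq 0 N)) <= eps).

(* the perturbed system S_t: last map (index m-1) translated by t *)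
Definition Ssys {n} (S : nat -> vec n -> vec n) (m : nat) (t : vec n) : nat -> vec n -> vec n :=
  fun k => if Nat.eqb k (m - 1) then (fun x => vadd (S k x) t) else S k.

From Stdlib Require Import Reals List Lra Lia Psatz ClassicalEpsilon.
From Stdlib Require Fin.
Open Scope R_scope.

(* Cover the attractor [K_t] by cylinders [S_w(K_t)] whose ratio [rho_w] has just dropped
   below [delta].  For a fixed pair of words [(u, v)], the translations [t] for which
   [S_k S_u(K_t)] meets [S_(m,t) S_v(K_t)] form a set of diameter [O(delta)]: a point of a
   cylinder moves by at most [|t - t'| / (1 - rbar)] when [t] changes, and since
   [r_k + r_m + rbar < 1] this is too slow to keep up with [t = S_k a - S_m b].
   For any [q > s_r] one may enlarge the ratios slightly so that [sum rho_j^q <= 1]; then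
   there are at most [O(delta^(-q))] stopping words, so the overlap set is covered by
   [O(delta^(-2q))] sets of diameter [O(delta)], of total volume [O(delta^(n - 2q))], which
   tends to [0] when [2q < n]. *)

Lemma fsum_ext n (f g : Fin.t n -> R) : (forall i, f i = g i) -> fsum n f = fsum n g.
Proof. revert f g; induction n; simpl; intros f g H; auto. rewrite H; f_equal; auto. Qed.

Lemma fsum_plus n (f g : Fin.t n -> R) : fsum n (fun i => f i + g i) = fsum n f + fsum n g.
Proof. revert f g; induction n; simpl; intros; [lra|]. rewrite IHn; lra. Qed.

Lemma fsum_scal n c (f : Fin.t n -> R) : fsum n (fun i => c * f i) = c * fsum n f.
Proof. revert f; induction n; simpl; intros; [lra|]. rewrite IHn; lra. Qed.

Lemma fsum_nonneg n (f : Fin.t n -> R) : (forall i, 0 <= f i) -> 0 <= fsum n f.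
Proof.
  revert f; induction n; simpl; intros f H; [lra|].
  pose proof (H Fin.F1); pose proof (IHn (fun i => f (Fin.FS i)) (fun i => H _)); lra.
Qed.

Lemma fsum_ge_term n (f : Fin.t n -> R) i : (forall i, 0 <= f i) -> f i <= fsum n f.
Proof.
  revert f i; induction n; intros f i H.
  - apply (Fin.case0 (fun _ => _) i).
  - simpl. revert f H. pattern i. apply Fin.caseS'.
    + intros f H. pose proof (fsum_nonneg n (fun i => f (Fin.FS i)) (fun j => H _)). lra.
    + intros p f H. pose proof (IHn (fun i => f (Fin.FS i)) p (fun j => H _)).
      pose proof (H Fin.F1). simpl in *. lra.
Qed.

Lemma fsum_Cauchy_Schwarz n (x y : Fin.t n -> R) :
  (fsum n (fun i => x i * y i))^2 <= fsum n (fun i => x i * x i) * fsum n (fun i => y i * y i).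
Proof.
  revert x y; induction n; simpl; intros x y; [lra|].
  specialize (IHn (fun i => x (Fin.FS i)) (fun i => y (Fin.FS i))). simpl in IHn.
  set (P := fsum n (fun i => x (Fin.FS i) * y (Fin.FS i))) in *.
  set (A := fsum n (fun i => x (Fin.FS i) * x (Fin.FS i))) in *.
  set (B := fsum n (fun i => y (Fin.FS i) * y (Fin.FS i))) in *.
  assert (HA : 0 <= A) by (apply fsum_nonneg; intros; nra).
  assert (HB : 0 <= B) by (apply fsum_nonneg; intros; nra).
  set (a := x Fin.F1); set (b := y Fin.F1).
  (* A * (a^2 B + b^2 A - 2abP) = (bA - aP)^2 + a^2 (AB - P^2) *)
  assert (Hcross : 0 <= a * a * B + b * b * A - 2 * a * b * P).
  { destruct (Req_dec A 0) as [HA0 | HA0].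
    - assert (HP : P = 0) by (rewrite HA0 in IHn; nra). rewrite HA0, HP; nra.
    - pose proof (pow2_ge_0 (b * A - a * P)).
      assert (0 <= a * a * (A * B - P ^ 2)) by (apply Rmult_le_pos; nra).
      assert (0 <= A * (a * a * B + b * b * A - 2 * a * b * P)) by nra.
      nra. }
  nra.
Qed.

Lemma fprod_const n c : fprod n (fun _ => c) = c ^ n.
Proof. induction n; simpl; auto. rewrite IHn; auto. Qed.

Lemma fprod_ext n (f g : Fin.t n -> R) : (forall i, f i = g i) -> fprod n f = fprod n g.
Proof. revert f g; induction n; simpl; intros f g H; auto. rewrite H; f_equal; auto. Qed.

Definition vzero {n} : vec n := fun _ => 0.

Lemma vnorm_ext {n} (x y : vec n) : (forall i, x i = y i) -> vnorm x = vnorm y.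
Proof. intros H; unfold vnorm; f_equal; apply fsum_ext; intros; rewrite H; auto. Qed.

Lemma vnorm_nonneg {n} (x : vec n) : 0 <= vnorm x.
Proof. apply sqrt_pos. Qed.

Lemma vnorm_vzero n : vnorm (@vzero n) = 0.
Proof.
  unfold vnorm, vzero.
  replace (fsum n (fun _ => 0 * 0)) with 0; [apply sqrt_0|].
  induction n; simpl; auto. rewrite <- IHn; ring.
Qed.

Lemma vnorm_opp {n} (x : vec n) : vnorm (fun i => - x i) = vnorm x.
Proof. unfold vnorm; f_equal; apply fsum_ext; intros; ring. Qed.

Lemma vnorm_triangle {n} (x y : vec n) : vnorm (fun i => x i + y i) <= vnorm x + vnorm y.
Proof.
  unfold vnorm.
  set (X := fsum n (fun i => x i * x i)); set (Y := fsum n (fun i => y i * y i)).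
  set (P := fsum n (fun i => x i * y i)).
  assert (HX : 0 <= X) by (apply fsum_nonneg; intros; nra).
  assert (HY : 0 <= Y) by (apply fsum_nonneg; intros; nra).
  assert (Hsq : fsum n (fun i => (x i + y i) * (x i + y i)) = X + 2 * P + Y).
  { unfold X, Y, P. rewrite <- fsum_scal, <- !fsum_plus. apply fsum_ext; intros; ring. }
  assert (HP : P <= sqrt X * sqrt Y).
  { rewrite <- sqrt_mult by auto. destruct (Rle_dec P 0).
    - pose proof (sqrt_pos (X * Y)); lra.
    - rewrite <- (sqrt_pow2 P) by lra. apply sqrt_le_1_alt. apply fsum_Cauchy_Schwarz. }
  pose proof (sqrt_pos X); pose proof (sqrt_pos Y).
  rewrite Hsq, <- (sqrt_pow2 (sqrt X + sqrt Y)) by lra.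
  apply sqrt_le_1_alt.
  replace ((sqrt X + sqrt Y) ^ 2) with (sqrt X * sqrt X + 2 * (sqrt X * sqrt Y) + sqrt Y * sqrt Y)
    by ring.
  rewrite !sqrt_sqrt by auto. lra.
Qed.

Lemma vnorm_sub {n} (x y : vec n) : vnorm (fun i => x i - y i) <= vnorm x + vnorm y.
Proof. rewrite <- (vnorm_opp y). apply (vnorm_triangle x (fun i => - y i)). Qed.

Lemma Rabs_coord_le_vnorm {n} (x : vec n) i : Rabs (x i) <= vnorm x.
Proof.
  unfold vnorm. rewrite <- sqrt_Rsqr_abs. apply sqrt_le_1_alt.
  apply (fsum_ge_term n (fun i => x i * x i)); intros; nra.
Qed.

Lemma vdist_nonneg {n} (x y : vec n) : 0 <= vdist x y.
Proof. apply vnorm_nonneg. Qed.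

Lemma vdist_sym {n} (x y : vec n) : vdist x y = vdist y x.
Proof. unfold vdist. rewrite <- vnorm_opp. apply vnorm_ext; intros; ring. Qed.

Lemma vdist_triangle {n} (x y z : vec n) : vdist x z <= vdist x y + vdist y z.
Proof.
  unfold vdist. eapply Rle_trans; [|apply vnorm_triangle].
  right; apply vnorm_ext; intros; ring.
Qed.

Lemma vdist_refl {n} (x : vec n) : vdist x x = 0.
Proof. unfold vdist. rewrite <- (vnorm_vzero n). apply vnorm_ext; intros; unfold vzero; ring. Qed.

Lemma vdist_vzero {n} (x : vec n) : vdist x vzero = vnorm x.
Proof. unfold vdist. apply vnorm_ext; intros; unfold vzero; ring. Qed.

Lemma vdist_vadd {n} (x y t u : vec n) : vdist (vadd x t) (vadd y u) <= vdist x y + vdist t u.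
Proof.
  unfold vdist, vadd. eapply Rle_trans; [|apply vnorm_triangle].
  right; apply vnorm_ext; intros; ring.
Qed.
Definition lsum {A} (f : A -> R) (l : list A) : R := fold_right Rplus 0 (map f l).

Lemma lsum_app {A} (f : A -> R) l1 l2 : lsum f (l1 ++ l2) = lsum f l1 + lsum f l2.
Proof. unfold lsum; induction l1; simpl; [lra|]. rewrite IHl1; lra. Qed.

Lemma lsum_flat_map {A B} (f : B -> R) (g : A -> list B) l :
  lsum f (flat_map g l) = lsum (fun a => lsum f (g a)) l.
Proof. induction l; simpl; [reflexivity|]. rewrite lsum_app, IHl. reflexivity. Qed.

Lemma lsum_map {A B} (f : B -> R) (g : A -> B) l : lsum f (map g l) = lsum (fun a => f (g a)) l.
Proof. unfold lsum; rewrite map_map; reflexivity. Qed.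

Lemma lsum_le {A} (f g : A -> R) l : (forall x, In x l -> f x <= g x) -> lsum f l <= lsum g l.
Proof.
  unfold lsum; induction l; simpl; intros H; [lra|].
  pose proof (H a (or_introl eq_refl)); pose proof (IHl (fun x Hx => H x (or_intror Hx))); lra.
Qed.

Lemma lsum_scal {A} c (f : A -> R) l : lsum (fun x => c * f x) l = c * lsum f l.
Proof. unfold lsum; induction l; simpl; [lra|]. rewrite IHl; lra. Qed.

Lemma lsum_plus {A} (f g : A -> R) l : lsum (fun x => f x + g x) l = lsum f l + lsum g l.
Proof. unfold lsum; induction l; simpl; [lra|]. rewrite IHl; lra. Qed.

Lemma lsum_const {A} c (l : list A) : lsum (fun _ => c) l = INR (length l) * c.
Proof.
  unfold lsum; induction l; cbn [length map fold_right]; [simpl; lra|].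
  rewrite IHl, S_INR; lra.
Qed.

Lemma lsum_nonneg {A} (f : A -> R) l : (forall x, In x l -> 0 <= f x) -> 0 <= lsum f l.
Proof. intros H. rewrite <- (Rmult_0_r (INR (length l))), <- lsum_const. apply lsum_le; auto. Qed.

Lemma lsum_ge_term {A} (f : A -> R) l x :
  (forall x, In x l -> 0 <= f x) -> In x l -> f x <= lsum f l.
Proof.
  unfold lsum; induction l; simpl; intros H Hx; [contradiction|].
  pose proof (lsum_nonneg f l (fun y Hy => H y (or_intror Hy))); unfold lsum in *.
  destruct Hx as [<- | Hx]; [lra|].
  pose proof (H a (or_introl eq_refl)); pose proof (IHl (fun y Hy => H y (or_intror Hy)) Hx); lra.
Qed.

Lemma lsum_seq_le (f : nat -> R) V len N :
  0 <= V -> (forall j, (j < len)%nat -> f j <= V) -> (forall j, (len <= j)%nat -> f j <= 0) ->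
  lsum f (seq 0 N) <= INR len * V.
Proof.
  intros HV Hlt Hge. rewrite <- (Nat.sub_0_r len). generalize 0%nat as a. unfold lsum.
  induction N as [|N IH]; intros a; simpl.
  - apply Rmult_le_pos; auto. apply pos_INR.
  - specialize (IH (S a)). destruct (Nat.lt_ge_cases a len) as [Ha | Ha].
    + replace (len - a)%nat with (S (len - S a)) by lia. rewrite S_INR. specialize (Hlt a Ha). lra.
    + replace (len - S a)%nat with 0%nat in IH by lia. replace (len - a)%nat with 0%nat by lia.
      specialize (Hge a Ha). lra.
Qed.

Lemma rmax_ge r m j : (j < m)%nat -> r j <= rmax r m.
Proof.
  unfold rmax. intros Hj. assert (Hin : In j (seq 0 m)) by (apply in_seq; lia).
  revert Hin; generalize (seq 0 m). induction l; simpl; [tauto|]. intros [<- | Hin].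
  - apply Rmax_l.
  - eapply Rle_trans; [apply IHl; auto | apply Rmax_r].
Qed.

Lemma rmax_nonneg r m : 0 <= rmax r m.
Proof.
  unfold rmax. generalize (seq 0 m). induction l; simpl; [lra|].
  eapply Rle_trans; [apply IHl | apply Rmax_r].
Qed.

Lemma compact_bounded {n} (X : vec n -> Prop) :
  is_compact X -> exists M, forall y, X y -> vnorm y <= M.
Proof.
  intros HX. destruct (HX (vec n) (fun c y => vdist c y < 1)) as [l Hl].
  - intros c y Hy. exists (1 - vdist c y). split; [lra|]. intros y' H'.
    pose proof (vdist_triangle c y y'). lra.
  - intros x _. exists x. rewrite vdist_refl; lra.
  - exists (lsum (fun c => vnorm c + 1) l). intros y Hy. destruct (Hl y Hy) as [c [Hc Hcy]].
    eapply Rle_trans; [|apply (lsum_ge_term (fun c => vnorm c + 1) l c); auto].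
    2: { intros; pose proof (vnorm_nonneg x); lra. }
    rewrite <- !vdist_vzero. pose proof (vdist_triangle y c vzero) as Htri.
    rewrite (vdist_sym y c) in Htri. lra.
Qed.

Lemma le_of_le_add_geometric x Q M rb :
  0 <= rb < 1 -> (forall N, x <= Q + rb ^ N * M) -> x <= Q.
Proof.
  intros Hrb Hx. destruct (Rle_dec x Q) as [|Hgt]; auto. exfalso.
  assert (He : 0 < (x - Q) / (Rabs M + 1))
    by (apply Rdiv_lt_0_compat; pose proof (Rabs_pos M); lra).
  destruct (pow_lt_1_zero rb ltac:(rewrite Rabs_pos_eq; lra) _ He) as [N HN].
  specialize (HN N (le_n N)). rewrite Rabs_pos_eq in HN by (apply pow_le; lra).
  assert (HNM : rb ^ N * (Rabs M + 1) < x - Q).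
  { apply (Rmult_lt_compat_r (Rabs M + 1)) in HN; [|pose proof (Rabs_pos M); lra].
    unfold Rdiv in HN. rewrite Rmult_assoc, Rinv_l in HN; pose proof (Rabs_pos M); lra. }
  pose proof (Hx N). pose proof (Rle_abs M). pose proof (pow_le rb N (proj1 Hrb)). nra.
Qed.

Lemma attractor_norm_le {n} (T : nat -> vec n -> vec n) m X rb B :
  is_attractor T m X -> (forall j, (j < m)%nat -> forall y, vnorm (T j y) <= rb * vnorm y + B) ->
  0 <= rb < 1 -> forall y, X y -> vnorm y <= B / (1 - rb).
Proof.
  intros [_ [Hc HX]] HT Hrb. destruct (compact_bounded X Hc) as [M0 HM0].
  set (Q := B / (1 - rb)). assert (HQ : B = (1 - rb) * Q) by (unfold Q; field; lra).
  set (M := M0 - Q).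
  assert (Hit : forall N y, X y -> vnorm y <= Q + rb ^ N * M).
  { induction N; intros y Hy.
    - simpl. pose proof (HM0 y Hy). unfold M. lra.
    - destruct (proj1 (HX y) Hy) as [j [Hj [z [Hz ->]]]].
      eapply Rle_trans; [apply HT; auto|]. pose proof (IHN z Hz).
      assert (rb * vnorm z <= rb * (Q + rb ^ N * M)) by (apply Rmult_le_compat_l; lra).
      simpl. nra. }
  intros y Hy. apply (le_of_le_add_geometric _ Q M rb Hrb). intros N; apply Hit; auto.
Qed.

Lemma Rpower_pos x y : 0 < Rpower x y.
Proof. apply exp_pos. Qed.

Lemma Rpower_1_l y : Rpower 1 y = 1.
Proof. unfold Rpower. rewrite ln_1, Rmult_0_r. apply exp_0. Qed.

Lemma Rpower_lt_1 x y : 0 < x < 1 -> 0 < y -> Rpower x y < 1.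
Proof.
  intros Hx Hy. rewrite <- (Rpower_1_l y). apply Rlt_Rpower_l; lra.
Qed.

Lemma Rpower_Rinv_r x q : 0 < x -> q <> 0 -> Rpower (Rpower x (/ q)) q = x.
Proof. intros. rewrite Rpower_mult, Rinv_l by auto. apply Rpower_1; auto. Qed.

Fixpoint wcomp {n} (T : nat -> vec n -> vec n) (w : list nat) (z : vec n) : vec n :=
  match w with nil => z | j :: w' => T j (wcomp T w' z) end.

Fixpoint wratio (rho : nat -> R) (w : list nat) : R :=
  match w with nil => 1 | j :: w' => rho j * wratio rho w' end.

(* Words are extended letter by letter until their running ratio [a * wratio rho w] drops
   to [d]; the fuel [N] makes the recursion structural. *)
Fixpoint stop_words (m : nat) (rho : nat -> R) (d : R) (N : nat) (a : R) : list (list nat) :=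
  if Rle_dec a d then nil :: nil else
  match N with
  | O => nil :: nil
  | S N' => flat_map (fun j => map (cons j) (stop_words m rho d N' (a * rho j))) (seq 0 m)
  end.

Lemma wratio_nonneg rho w : (forall j, In j w -> 0 <= rho j) -> 0 <= wratio rho w.
Proof.
  induction w; simpl; intros H; [lra|].
  apply Rmult_le_pos; [apply H; auto | apply IHw; auto].
Qed.

Lemma stop_words_letters m rho d N a w :
  In w (stop_words m rho d N a) -> forall j, In j w -> (j < m)%nat.
Proof.
  revert a w; induction N; intros a w; simpl; destruct (Rle_dec a d); simpl;
    try (intros [<- | []]; simpl; tauto).
  intros Hw. apply in_flat_map in Hw as [j [Hj Hw]]. apply in_map_iff in Hw as [w' [<- Hw']].
  intros i [<- | Hi]; [apply in_seq in Hj; lia | eapply IHN; eauto].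
Qed.

Lemma stop_words_cover {n} m rho d N a (T : nat -> vec n -> vec n) (X : vec n -> Prop) :
  (forall y, X y -> exists j, (j < m)%nat /\ exists z, X z /\ y = T j z) ->
  forall y, X y -> exists w z, In w (stop_words m rho d N a) /\ X z /\ y = wcomp T w z.
Proof.
  intros HX. revert a; induction N; intros a y Hy; simpl; destruct (Rle_dec a d);
    try solve [exists nil, y; simpl; auto].
  destruct (HX y Hy) as [j [Hj [y0 [Hy0 ->]]]].
  destruct (IHN (a * rho j) y0 Hy0) as [w [z [Hw [Hz ->]]]].
  exists (j :: w), z. split; [|auto].
  apply in_flat_map. exists j. split; [apply in_seq; lia | apply in_map; auto].
Qed.

Lemma stop_words_ratio_le m rho d N a rM w :
  0 <= a -> (forall j, (j < m)%nat -> 0 <= rho j <= rM) -> a * rM ^ N <= d ->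
  In w (stop_words m rho d N a) -> a * wratio rho w <= d.
Proof.
  revert a w; induction N; intros a w Ha Hrho Hd; simpl; destruct (Rle_dec a d); simpl;
    try (intros [<- | []]; simpl; lra).
  intros Hw. apply in_flat_map in Hw as [j [Hj Hw]]. apply in_map_iff in Hw as [w' [<- Hw']].
  apply in_seq in Hj. simpl. specialize (Hrho j ltac:(lia)) as Hj'.
  rewrite <- Rmult_assoc. apply (IHN (a * rho j)); auto; [nra|].
  simpl in Hd. pose proof (pow_le rM N ltac:(lra)).
  assert (a * rho j * rM ^ N <= a * (rM * rM ^ N)) by
    (rewrite Rmult_assoc; apply Rmult_le_compat_l; auto; apply Rmult_le_compat_r; lra).
  lra.
Qed.

Lemma stop_words_ratio_ge m rho d N a eta w :
  0 < a -> 0 < eta -> (forall j, (j < m)%nat -> eta <= rho j) ->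
  In w (stop_words m rho d N a) -> Rmin a (eta * d) <= a * wratio rho w.
Proof.
  revert a w; induction N; intros a w Ha He Hrho; simpl; destruct (Rle_dec a d); simpl;
    try (intros [<- | []]; simpl; pose proof (Rmin_l a (eta * d)); lra).
  intros Hw. apply in_flat_map in Hw as [j [Hj Hw]]. apply in_map_iff in Hw as [w' [<- Hw']].
  apply in_seq in Hj. simpl. specialize (Hrho j ltac:(lia)) as Hj'.
  rewrite <- Rmult_assoc. eapply Rle_trans; [|apply (IHN (a * rho j)); auto; nra].
  assert (eta * d < a * rho j) by nra.
  unfold Rmin. destruct (Rle_dec a (eta * d)); destruct (Rle_dec (a * rho j) (eta * d)); lra.
Qed.

Lemma stop_words_power_sum m rho d N a q :
  0 < a -> (forall j, (j < m)%nat -> 0 < rho j) ->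
  lsum (fun j => Rpower (rho j) q) (seq 0 m) <= 1 ->
  lsum (fun w => Rpower (a * wratio rho w) q) (stop_words m rho d N a) <= Rpower a q.
Proof.
  revert a; induction N; intros a Ha Hrho Hsum; simpl; destruct (Rle_dec a d);
    try (unfold lsum; simpl; rewrite Rmult_1_r; lra).
  rewrite lsum_flat_map.
  apply Rle_trans with (lsum (fun j => Rpower a q * Rpower (rho j) q) (seq 0 m)).
  - apply lsum_le. intros j Hj. apply in_seq in Hj. rewrite lsum_map. simpl.
    rewrite Rpower_mult_distr by (auto; apply Hrho; lia).
    eapply Rle_trans; [|apply (IHN (a * rho j))]; auto.
    + right. unfold lsum. f_equal. apply map_ext. intros w. f_equal. ring.
    + apply Rmult_lt_0_compat; auto; apply Hrho; lia.
  - rewrite lsum_scal. pose proof (exp_pos (q * ln a)). unfold Rpower in *. nra.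
Qed.

Lemma stop_words_exist m rho eta rM q delta :
  0 < eta <= rM -> rM < 1 -> 0 <= q -> (forall j, (j < m)%nat -> eta <= rho j <= rM) ->
  lsum (fun j => Rpower (rho j) q) (seq 0 m) <= 1 -> 0 < delta < 1 ->
  exists W : list (list nat),
    INR (length W) <= Rpower (eta * delta) (- q) /\
    (forall w, In w W -> (forall j, In j w -> (j < m)%nat) /\ wratio rho w <= delta) /\
    (forall n (T : nat -> vec n -> vec n) (X : vec n -> Prop),
       (forall y, X y -> exists j, (j < m)%nat /\ exists z, X z /\ y = T j z) ->
       forall y, X y -> exists w z, In w W /\ X z /\ y = wcomp T w z).
Proof.
  intros Heta HrM Hq Hrho Hsum Hdelta.
  destruct (pow_lt_1_zero rM ltac:(rewrite Rabs_pos_eq; lra) delta ltac:(lra)) as [N HN].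
  specialize (HN N (le_n N)). rewrite Rabs_pos_eq in HN by (apply pow_le; lra).
  set (W := stop_words m rho delta N 1).
  assert (Hlow : forall w, In w W -> eta * delta <= wratio rho w).
  { intros w Hw. pose proof (stop_words_ratio_ge m rho delta N 1 eta w ltac:(lra) ltac:(lra)
      (fun j Hj => proj1 (Hrho j Hj)) Hw) as Hge.
    rewrite Rmin_right in Hge by nra. lra. }
  assert (Hcount : INR (length W) * Rpower (eta * delta) q <= 1).
  { rewrite <- lsum_const, <- (Rpower_1_l q).
    eapply Rle_trans; [|apply (stop_words_power_sum m rho delta N 1 q); auto; try lra].
    - apply lsum_le. intros w Hw. rewrite Rmult_1_l. apply Rle_Rpower_l; auto.
      pose proof (Hlow w Hw); nra.
    - intros j Hj; pose proof (Hrho j Hj); lra. }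
  exists W. split; [|split].
  - rewrite Rpower_Ropp. pose proof (Rpower_pos (eta * delta) q).
    apply (Rmult_le_reg_r (Rpower (eta * delta) q)); auto. rewrite Rinv_l; lra.
  - intros w Hw. split; [apply (stop_words_letters m rho delta N 1 w Hw)|].
    rewrite <- (Rmult_1_l (wratio rho w)).
    apply (stop_words_ratio_le m rho delta N 1 rM); auto; try lra.
    intros j Hj; pose proof (Hrho j Hj); lra.
  - intros n T X HX. apply stop_words_cover; auto.
Qed.

Lemma sim_dim_exists_pos r m s : sim_dim r m s -> exists j, (j < m)%nat /\ 0 < r j.
Proof.
  intros Hsim. apply Classical_Prop.NNPP. intros Hnone.
  assert (Hsum : lsum (fun j => rpow (r j) s) (seq 0 m) <= INR (length (seq 0 m)) * 0).
  { rewrite <- lsum_const. apply lsum_le. intros j Hj. apply in_seq in Hj.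
    unfold rpow. destruct (Rlt_dec 0 (r j)); [|lra].
    exfalso; apply Hnone; exists j; split; auto; lia. }
  unfold sim_dim in Hsim. unfold lsum in Hsum. lra.
Qed.

Lemma sim_dim_rpow_sum_le r m s q :
  sim_dim r m s -> s <= q -> 0 < rmax r m ->
  lsum (fun j => rpow (r j) q) (seq 0 m) <= Rpower (rmax r m) (q - s).
Proof.
  intros Hsim Hsq Hrb.
  apply Rle_trans with (lsum (fun j => Rpower (rmax r m) (q - s) * rpow (r j) s) (seq 0 m)).
  - apply lsum_le. intros j Hj. apply in_seq in Hj. unfold rpow.
    destruct (Rlt_dec 0 (r j)); [|rewrite Rmult_0_r; lra].
    replace q with (s + (q - s)) at 1 by ring. rewrite Rpower_plus, Rmult_comm.
    apply Rmult_le_compat_r; [left; apply Rpower_pos|].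
    apply Rle_Rpower_l; [lra|]. split; auto. apply rmax_ge; lia.
  - rewrite lsum_scal. unfold sim_dim in Hsim. unfold lsum. rewrite Hsim. lra.
Qed.

(* Since [s < q], the ratios satisfy [sum r_j^q <= rbar^(q-s) < 1]; the slack lets us raise
   every ratio to at least [eta > 0] while keeping [sum rho_j^q <= 1]. *)
Lemma dominating_ratios r m s q :
  (forall j, (j < m)%nat -> 0 <= r j) -> rmax r m < 1 -> sim_dim r m s -> s < q -> 0 < q ->
  exists (rho : nat -> R) (eta : R), 0 < eta <= rmax r m /\
    (forall j, (j < m)%nat -> r j <= rho j /\ eta <= rho j <= rmax r m) /\
    lsum (fun j => Rpower (rho j) q) (seq 0 m) <= 1.
Proof.
  intros Hr0 Hrb1 Hsim Hsq Hq.
  destruct (sim_dim_exists_pos r m s Hsim) as [j0 [Hj0 Hrj0]].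
  assert (Hrb : 0 < rmax r m) by (pose proof (rmax_ge r m j0 Hj0); lra).
  set (gap := Rpower (rmax r m) (q - s)).
  assert (Hgap : gap < 1) by (apply Rpower_lt_1; lra).
  assert (Hm : 1 <= INR m) by (apply (le_INR 1); lia).
  set (eta0 := (1 - gap) / INR m).
  assert (Heta0 : 0 < eta0) by (apply Rdiv_lt_0_compat; lra).
  set (eta := Rmin (Rpower eta0 (/ q)) (rmax r m)).
  assert (Heta : 0 < eta) by (apply Rmin_glb_lt; [apply Rpower_pos | lra]).
  assert (Hetaq : Rpower eta q <= eta0).
  { rewrite <- (Rpower_Rinv_r eta0 q) by lra. apply Rle_Rpower_l; [lra|].
    split; auto. apply Rmin_l. }
  exists (fun j => Rmax (r j) eta), eta. split; [split; [lra | apply Rmin_r]|split].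
  - intros j Hj. split; [apply Rmax_l | split; [apply Rmax_r|]].
    apply Rmax_lub; [apply rmax_ge; auto | apply Rmin_r].
  - apply Rle_trans with (lsum (fun j => rpow (r j) q + Rpower eta q) (seq 0 m)).
    + apply lsum_le. intros j _. unfold Rmax, rpow.
      destruct (Rle_dec (r j) eta), (Rlt_dec 0 (r j));
        pose proof (Rpower_pos (r j) q); pose proof (Rpower_pos eta q); lra.
    + rewrite lsum_plus, lsum_const, length_seq.
      pose proof (sim_dim_rpow_sum_le r m s q Hsim ltac:(lra) Hrb) as Hrq. fold gap in Hrq.
      assert (INR m * Rpower eta q <= 1 - gap).
      { replace (1 - gap) with (INR m * eta0) by (unfold eta0; field; lra).
        apply Rmult_le_compat_l; lra. }
      lra.
Qed.

Lemma lebesgue_null_of_covers {n} (E : vec n -> Prop) (C D p : R) :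
  0 <= C -> 0 <= p < INR n ->
  (forall delta, 0 < delta < 1 -> exists l : list (vec n -> Prop),
      INR (length l) <= D * Rpower delta (- p) /\
      (forall x, E x -> exists B, In B l /\ B x) /\
      (forall B, In B l -> forall x y, B x -> B y -> vdist x y <= C * delta)) ->
  lebesgue_null E.
Proof.
  intros HC Hp Hcov eps Heps.
  assert (Hn : (0 < n)%nat) by (destruct n; [simpl in Hp; lra | lia]).
  assert (HD : 0 <= D).
  { destruct (Hcov (1/2) ltac:(lra)) as [l [Hl _]].
    pose proof (pos_INR (length l)); pose proof (Rpower_pos (1/2) (- p)); nra. }
  set (V := D * (2 * C) ^ n).
  assert (HV : 0 <= V) by (apply Rmult_le_pos; auto; apply pow_le; lra).
  set (delta := Rmin (1/2) (Rpower (eps / (V + 1)) (/ (INR n - p)))).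
  assert (Hdelta : 0 < delta < 1).
  { split; [apply Rmin_glb_lt; [lra | apply Rpower_pos]|].
    eapply Rle_lt_trans; [apply Rmin_l | lra]. }
  assert (Hsmall : Rpower delta (INR n - p) <= eps / (V + 1)).
  { rewrite <- (Rpower_Rinv_r (eps / (V + 1)) (INR n - p)) by (try apply Rdiv_lt_0_compat; lra).
    apply Rle_Rpower_l; [lra|]. split; [lra | apply Rmin_r]. }
  destruct (Hcov delta Hdelta) as [l [Hlen [Hcover Hdiam]]].
  set (h := C * delta).
  assert (Hh : 0 <= h) by (apply Rmult_le_pos; lra).
  set (cen := fun j => epsilon (inhabits (@vzero n)) (nth j l (fun _ => False))).
  exists (fun j i => if Compare_dec.lt_dec j (length l) then cen j i - h else 0).
  exists (fun j i => if Compare_dec.lt_dec j (length l) then cen j i + h else 0).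
  split; [|split].
  - intros j i. destruct (Compare_dec.lt_dec j (length l)); lra.
  - intros x Hx. destruct (Hcover x Hx) as [B [HB HBx]].
    destruct (In_nth l B (fun _ => False) HB) as [j [Hj HjB]].
    exists j. intros i. destruct (Compare_dec.lt_dec j (length l)); [|lia].
    assert (Hc : B (cen j)) by (unfold cen; rewrite HjB; apply epsilon_spec; exists x; auto).
    pose proof (Hdiam B HB x (cen j) HBx Hc) as Hxc.
    pose proof (Rabs_coord_le_vnorm (fun i => x i - cen j i) i) as Hi.
    unfold vdist in Hxc. fold h in Hxc. revert Hi. unfold Rabs. destruct (Rcase_abs _); lra.
  - intros N. change (lsum (fun j => fprod n (fun i =>
      (if Compare_dec.lt_dec j (length l) then cen j i + h else 0) -
      (if Compare_dec.lt_dec j (length l) then cen j i - h else 0))) (seq 0 N) <= eps).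
    eapply Rle_trans; [apply (lsum_seq_le _ ((2 * h) ^ n) (length l))|].
    + apply pow_le; lra.
    + intros j Hj. right. rewrite <- fprod_const. apply fprod_ext. intros i.
      destruct (Compare_dec.lt_dec j (length l)); [ring | lia].
    + intros j Hj. right. rewrite (fprod_ext n _ (fun _ => 0)), fprod_const; [apply pow_i; lia|].
      intros i. destruct (Compare_dec.lt_dec j (length l)); [lia | ring].
    + assert (Hvol : INR (length l) * (2 * h) ^ n <= V * Rpower delta (INR n - p)).
      { unfold h, V. replace (2 * (C * delta)) with (2 * C * delta) by ring.
        rewrite Rpow_mult_distr, <- (Rpower_pow n delta) by lra.
        replace (INR n - p) with (- p + INR n) by ring. rewrite Rpower_plus.
        replace (D * (2 * C) ^ n * (Rpower delta (- p) * Rpower delta (INR n)))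
          with (D * Rpower delta (- p) * ((2 * C) ^ n * Rpower delta (INR n))) by ring.
        apply Rmult_le_compat_r; auto.
        pose proof (pow_le (2 * C) n ltac:(lra)); pose proof (Rpower_pos delta (INR n)); nra. }
      assert (V * Rpower delta (INR n - p) <= V * (eps / (V + 1)))
        by (apply Rmult_le_compat_l; auto).
      assert (V * (eps / (V + 1)) <= eps).
      { apply (Rmult_le_reg_r (V + 1)); [lra|]. unfold Rdiv.
        rewrite Rmult_assoc, (Rmult_assoc eps), Rinv_l by lra. nra. }
      lra.
Qed.

Lemma Ssys_dist {n} (S : nat -> vec n -> vec n) m r t1 t2 j x1 x2 :
  is_lip_const (S j) (r j) ->
  vdist (Ssys S m t1 j x1) (Ssys S m t2 j x2) <= r j * vdist x1 x2 + vdist t1 t2.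
Proof.
  intros [_ Hlip]. unfold Ssys. destruct (Nat.eqb j (m - 1)).
  - eapply Rle_trans; [apply vdist_vadd|]. pose proof (Hlip x1 x2); lra.
  - pose proof (Hlip x1 x2); pose proof (vdist_nonneg t1 t2); lra.
Qed.

Lemma Ssys_norm {n} (S : nat -> vec n -> vec n) m t j y :
  vnorm (Ssys S m t j y) <= vnorm (S j y) + vnorm t.
Proof.
  unfold Ssys. destruct (Nat.eqb j (m - 1)); [apply vnorm_triangle|].
  pose proof (vnorm_nonneg t); lra.
Qed.

(* The additive errors accumulate as a geometric series of ratio [rb]. *)
Lemma wcomp_dist {n} (T1 T2 : nat -> vec n -> vec n) m r rho rb X w z1 z2 :
  (forall j, (j < m)%nat -> forall x1 x2, vdist (T1 j x1) (T2 j x2) <= r j * vdist x1 x2 + X) ->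
  (forall j, (j < m)%nat -> 0 <= r j <= rho j /\ r j <= rb) -> rb < 1 -> 0 <= X ->
  (forall j, In j w -> (j < m)%nat) ->
  vdist (wcomp T1 w z1) (wcomp T2 w z2) <= wratio rho w * vdist z1 z2 + X / (1 - rb).
Proof.
  intros HT Hr Hrb HX. set (Y := X / (1 - rb)).
  assert (HY : X = (1 - rb) * Y) by (unfold Y; field; lra).
  assert (HY0 : 0 <= Y)
    by (unfold Y; apply Rmult_le_pos; [lra | left; apply Rinv_0_lt_compat; lra]).
  pose proof (vdist_nonneg z1 z2).
  induction w as [|j w IH]; simpl; intros Hw; [lra|].
  assert (Hj : (j < m)%nat) by (apply Hw; left; auto).
  specialize (IH (fun i Hi => Hw i (or_intror Hi))).
  destruct (Hr j Hj) as [[Hr0 Hrrho] Hrb'].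
  assert (0 <= wratio rho w).
  { apply wratio_nonneg. intros i Hi. destruct (Hr i (Hw i (or_intror Hi))). lra. }
  eapply Rle_trans; [apply HT; auto|].
  assert (r j * vdist (wcomp T1 w z1) (wcomp T2 w z2) <= r j * (wratio rho w * vdist z1 z2 + Y))
    by (apply Rmult_le_compat_l; auto).
  assert (r j * (wratio rho w * vdist z1 z2) <= rho j * (wratio rho w * vdist z1 z2))
    by (apply Rmult_le_compat_r; auto; apply Rmult_le_pos; auto).
  assert (r j * Y <= rb * Y) by (apply Rmult_le_compat_r; auto).
  nra.
Qed.

Section Overlaps.

Variables (n m k : nat) (S : nat -> vec n -> vec n) (r : nat -> R) (K : vec n -> vec n -> Prop).
Hypothesis S_lip : forall j, (j < m)%nat -> is_lip_const (S j) (r j).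
Hypothesis K_attr : forall t, is_attractor (Ssys S m t) m (K t).
Hypothesis k_lt : (k < m - 1)%nat.
Hypothesis ratios_small : r k + r (m - 1)%nat + rmax r m < 1.

Definition overlap (t : vec n) : Prop := exists x,
  (exists y, K t y /\ x = S k y) /\ (exists y, K t y /\ x = vadd (S (m - 1)%nat y) t).

Let A := lsum (fun j => vnorm (S j vzero)) (seq 0 m).
Let c := (r k + r (m - 1)%nat) / (1 - rmax r m).
Let R0 := (c + 2) * A / (1 - c).

Lemma r_nonneg j : (j < m)%nat -> 0 <= r j.
Proof. intros Hj. apply (S_lip j Hj). Qed.

Lemma rmax_lt_1 : rmax r m < 1.
Proof. pose proof (r_nonneg k ltac:(lia)); pose proof (r_nonneg (m - 1) ltac:(lia)); lra. Qed.

Lemma c_bounds : 0 <= c < 1.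
Proof.
  pose proof (r_nonneg k ltac:(lia)); pose proof (r_nonneg (m - 1) ltac:(lia)).
  pose proof rmax_lt_1. unfold c. split.
  - apply Rmult_le_pos; [lra | left; apply Rinv_0_lt_compat; lra].
  - apply (Rmult_lt_reg_r (1 - rmax r m)); [lra|].
    unfold Rdiv. rewrite Rmult_assoc, Rinv_l; lra.
Qed.

Lemma A_nonneg : 0 <= A.
Proof. apply lsum_nonneg; intros; apply vnorm_nonneg. Qed.

Lemma S_norm_le j y : (j < m)%nat -> vnorm (S j y) <= r j * vnorm y + A.
Proof.
  intros Hj. rewrite <- !vdist_vzero.
  pose proof (vdist_triangle (S j y) (S j vzero) vzero). pose proof (proj2 (S_lip j Hj) y vzero).
  assert (vdist (S j vzero) vzero <= A).
  { rewrite vdist_vzero. apply (lsum_ge_term (fun j => vnorm (S j vzero))).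
    - intros; apply vnorm_nonneg.
    - apply in_seq; lia. }
  lra.
Qed.

Lemma K_norm_le t y : K t y -> vnorm y <= (A + vnorm t) / (1 - rmax r m).
Proof.
  apply (attractor_norm_le (Ssys S m t) m (K t)); auto.
  - intros j Hj z. eapply Rle_trans; [apply Ssys_norm|].
    pose proof (S_norm_le j z Hj).
    assert (r j * vnorm z <= rmax r m * vnorm z) by
      (apply Rmult_le_compat_r; [apply vnorm_nonneg | apply rmax_ge; auto]).
    lra.
  - split; [apply rmax_nonneg | apply rmax_lt_1].
Qed.

Lemma overlap_norm_le t : overlap t -> vnorm t <= R0.
Proof.
  intros [x [[y [Hy ->]] [y' [Hy' Hx]]]].
  assert (Ht : vnorm t <= vnorm (S k y) + vnorm (S (m - 1)%nat y')).
  { eapply Rle_trans; [|apply vnorm_sub]. right. apply vnorm_ext. intros i.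
    assert (Hxi : S k y i = vadd (S (m - 1)%nat y') t i) by (rewrite Hx; auto).
    unfold vadd in Hxi. lra. }
  pose proof (S_norm_le k y ltac:(lia)); pose proof (S_norm_le (m - 1) y' ltac:(lia)).
  pose proof (K_norm_le t y Hy); pose proof (K_norm_le t y' Hy').
  pose proof (r_nonneg k ltac:(lia)); pose proof (r_nonneg (m - 1) ltac:(lia)).
  pose proof rmax_lt_1; pose proof c_bounds; pose proof A_nonneg; pose proof (vnorm_nonneg t).
  assert (r k * vnorm y + r (m - 1)%nat * vnorm y' <= c * (A + vnorm t)).
  { apply Rle_trans with (r k * ((A + vnorm t) / (1 - rmax r m)) +
                         r (m - 1)%nat * ((A + vnorm t) / (1 - rmax r m))).
    - apply Rplus_le_compat; apply Rmult_le_compat_l; auto.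
    - right. unfold c. field. lra. }
  unfold R0. apply (Rmult_le_reg_r (1 - c)); [lra|].
  unfold Rdiv. rewrite Rmult_assoc, Rinv_l by lra. nra.
Qed.

Lemma overlap_params_close rho delta D u v t1 t2 z1 z2 z1' z2' :
  (forall j, (j < m)%nat -> r j <= rho j) ->
  (forall j, In j u -> (j < m)%nat) -> (forall j, In j v -> (j < m)%nat) ->
  wratio rho u <= delta -> wratio rho v <= delta -> vdist z1 z2 <= D -> vdist z1' z2' <= D ->
  S k (wcomp (Ssys S m t1) u z1) = vadd (S (m - 1)%nat (wcomp (Ssys S m t1) v z1')) t1 ->
  S k (wcomp (Ssys S m t2) u z2) = vadd (S (m - 1)%nat (wcomp (Ssys S m t2) v z2')) t2 ->
  (1 - c) * vdist t1 t2 <= delta * D.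
Proof.
  intros Hrho Hu Hv Hru Hrv HD HD' E1 E2.
  set (a1 := wcomp (Ssys S m t1) u z1) in *; set (a2 := wcomp (Ssys S m t2) u z2) in *.
  set (b1 := wcomp (Ssys S m t1) v z1') in *; set (b2 := wcomp (Ssys S m t2) v z2') in *.
  set (X := vdist t1 t2).
  assert (HX : X <= vdist (S k a1) (S k a2) + vdist (S (m - 1)%nat b1) (S (m - 1)%nat b2)).
  { unfold X, vdist. eapply Rle_trans; [|apply vnorm_sub]. right. apply vnorm_ext. intros i.
    assert (e1 : S k a1 i = vadd (S (m - 1)%nat b1) t1 i) by (rewrite E1; auto).
    assert (e2 : S k a2 i = vadd (S (m - 1)%nat b2) t2 i) by (rewrite E2; auto).
    unfold vadd in e1, e2. lra. }
  assert (Hratio : forall w, (forall j, In j w -> (j < m)%nat) -> 0 <= wratio rho w).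
  { intros w Hw. apply wratio_nonneg. intros j Hj.
    pose proof (r_nonneg j (Hw j Hj)); pose proof (Hrho j (Hw j Hj)). lra. }
  assert (HdD : 0 <= delta * D).
  { pose proof (Hratio u Hu); pose proof (vdist_nonneg z1 z2). apply Rmult_le_pos; lra. }
  assert (Hwords : forall w y1 y2, (forall j, In j w -> (j < m)%nat) -> wratio rho w <= delta ->
      vdist y1 y2 <= D ->
      vdist (wcomp (Ssys S m t1) w y1) (wcomp (Ssys S m t2) w y2)
        <= delta * D + X / (1 - rmax r m)).
  { intros w y1 y2 Hw Hwd Hy.
    eapply Rle_trans; [apply (wcomp_dist _ _ m r rho (rmax r m) X)|].
    - intros j Hj x1 x2. apply Ssys_dist; auto.
    - intros j Hj. pose proof (r_nonneg j Hj); pose proof (Hrho j Hj).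
      pose proof (rmax_ge r m j Hj). lra.
    - apply rmax_lt_1.
    - apply vdist_nonneg.
    - exact Hw.
    - assert (wratio rho w * vdist y1 y2 <= delta * D)
        by (apply Rmult_le_compat; [apply Hratio; auto | apply vdist_nonneg | auto | auto]).
      lra. }
  pose proof (Hwords u z1 z2 Hu Hru HD) as Ha; pose proof (Hwords v z1' z2' Hv Hrv HD') as Hb.
  fold a1 a2 in Ha; fold b1 b2 in Hb.
  pose proof (proj2 (S_lip k ltac:(lia)) a1 a2).
  pose proof (proj2 (S_lip (m - 1) ltac:(lia)) b1 b2).
  pose proof (r_nonneg k ltac:(lia)); pose proof (r_nonneg (m - 1) ltac:(lia)).
  pose proof rmax_lt_1.
  set (Y := X / (1 - rmax r m)) in *.
  assert (HcY : (r k + r (m - 1)%nat) * Y = c * X) by (unfold Y, c; field; lra).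
  assert (r k * vdist a1 a2 <= r k * (delta * D + Y)) by (apply Rmult_le_compat_l; lra).
  assert (r (m - 1)%nat * vdist b1 b2 <= r (m - 1)%nat * (delta * D + Y))
    by (apply Rmult_le_compat_l; lra).
  assert ((r k + r (m - 1)%nat) * (delta * D) <= delta * D).
  { pose proof (rmax_nonneg r m). pose proof (Rmult_le_pos (1 - (r k + r (m - 1)%nat)) (delta * D)).
    nra. }
  nra.
Qed.

Let M := (A + R0) / (1 - rmax r m).

Lemma R0_nonneg : 0 <= R0.
Proof.
  pose proof c_bounds; pose proof A_nonneg. unfold R0.
  apply Rmult_le_pos; [nra | left; apply Rinv_0_lt_compat; lra].
Qed.

Lemma K_vdist_le t1 t2 z1 z2 :
  vnorm t1 <= R0 -> vnorm t2 <= R0 -> K t1 z1 -> K t2 z2 -> vdist z1 z2 <= 2 * M.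
Proof.
  intros Ht1 Ht2 Hz1 Hz2.
  assert (HM : forall t z, vnorm t <= R0 -> K t z -> vnorm z <= M).
  { intros t z Ht Hz. eapply Rle_trans; [apply (K_norm_le t z Hz)|]. pose proof rmax_lt_1.
    apply Rmult_le_compat_r; [left; apply Rinv_0_lt_compat |]; lra. }
  unfold vdist. eapply Rle_trans; [apply vnorm_sub|].
  pose proof (HM t1 z1 Ht1 Hz1); pose proof (HM t2 z2 Ht2 Hz2). lra.
Qed.

Lemma overlap_small_covers s q : sim_dim r m s -> s < q -> 0 < q ->
  exists C D, 0 <= C /\ forall delta, 0 < delta < 1 -> exists l : list (vec n -> Prop),
    INR (length l) <= D * Rpower delta (- (2 * q)) /\
    (forall t, overlap t -> exists B, In B l /\ B t) /\
    (forall B, In B l -> forall t1 t2, B t1 -> B t2 -> vdist t1 t2 <= C * delta).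
Proof.
  intros Hsim Hsq Hq.
  destruct (dominating_ratios r m s q r_nonneg rmax_lt_1 Hsim Hsq Hq)
    as [rho [eta [Heta [Hrho Hsum]]]].
  pose proof c_bounds; pose proof R0_nonneg; pose proof A_nonneg; pose proof rmax_lt_1.
  exists (2 * M / (1 - c)), (Rpower eta (- (2 * q))). split.
  { unfold M. apply Rmult_le_pos; [|left; apply Rinv_0_lt_compat; lra].
    apply Rmult_le_pos; [lra|]. apply Rmult_le_pos; [lra | left; apply Rinv_0_lt_compat; lra]. }
  intros delta Hdelta.
  destruct (stop_words_exist m rho eta (rmax r m) q delta) as [W [HWlen [HW HWcov]]]; auto; try lra.
  { intros j Hj. apply Hrho; auto. }
  set (piece := fun (uv : list nat * list nat) t => vnorm t <= R0 /\ exists z z', K t z /\ K t z' /\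
     S k (wcomp (Ssys S m t) (fst uv) z) = vadd (S (m - 1)%nat (wcomp (Ssys S m t) (snd uv) z')) t).
  exists (map piece (list_prod W W)). split; [|split].
  - rewrite length_map, length_prod, mult_INR.
    pose proof (pos_INR (length W)).
    replace (Rpower eta (- (2 * q)) * Rpower delta (- (2 * q)))
      with (Rpower (eta * delta) (- q) * Rpower (eta * delta) (- q)).
    + apply Rmult_le_compat; auto.
    + rewrite <- Rpower_plus, Rpower_mult_distr by lra. f_equal. ring.
  - intros t Ht. pose proof (overlap_norm_le t Ht) as Htn.
    destruct Ht as [x [[y [Hy ->]] [y' [Hy' Hx]]]].
    assert (Hself := fun y0 => proj1 (proj2 (proj2 (K_attr t)) y0)).
    destruct (HWcov n (Ssys S m t) (K t) Hself y Hy) as [u [z [Hu [Hz ->]]]].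
    destruct (HWcov n (Ssys S m t) (K t) Hself y' Hy') as [v [z' [Hv [Hz' ->]]]].
    exists (piece (u, v)). split; [apply in_map, in_prod; auto|].
    split; auto. exists z, z'. auto.
  - intros B HB t1 t2 Ht1 Ht2. apply in_map_iff in HB as [[u v] [<- Huv]].
    apply in_prod_iff in Huv as [Hu Hv].
    destruct Ht1 as [Hn1 [z1 [z1' [Hz1 [Hz1' E1]]]]], Ht2 as [Hn2 [z2 [z2' [Hz2 [Hz2' E2]]]]].
    pose proof (overlap_params_close rho delta (2 * M) u v t1 t2 z1 z2 z1' z2'
      (fun j Hj => proj1 (Hrho j Hj)) (proj1 (HW u Hu)) (proj1 (HW v Hv))
      (proj2 (HW u Hu)) (proj2 (HW v Hv)) (K_vdist_le t1 t2 z1 z2 Hn1 Hn2 Hz1 Hz2)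
      (K_vdist_le t1 t2 z1' z2' Hn1 Hn2 Hz1' Hz2') E1 E2).
    apply (Rmult_le_reg_l (1 - c)); [lra|].
    replace ((1 - c) * (2 * M / (1 - c) * delta)) with (delta * (2 * M)) by (field; lra). lra.
Qed.

End Overlaps.

Lemma lip_eq_vec0 (f : vec 0 -> vec 0) L : lip_eq f L -> L = 0.
Proof.
  intros [[HL _] Hmin].
  assert (Hzero : is_lip_const f 0).
  { split; [lra|]. intros x y. unfold vdist, vnorm. simpl. rewrite sqrt_0. lra. }
  pose proof (Hmin 0 Hzero). lra.
Qed.

Lemma exists_between_pos s x : s < x -> 0 < x -> exists q, 0 < q /\ s < q /\ q < x.
Proof.
  intros Hsx Hx. exists ((Rmax s 0 + x) / 2).
  pose proof (Rmax_l s 0); pose proof (Rmax_r s 0); pose proof (Rmax_lub_lt s 0 x Hsx Hx). lra.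
Qed.

Theorem corollary6 (n m : nat) (S : nat -> vec n -> vec n) (r : nat -> R)
  (K : vec n -> vec n -> Prop) (s : R) (k : nat) :
  (forall j, (j < m)%nat -> lip_eq (S j) (r j) /\ r j < 1) ->
  (forall t, is_attractor (Ssys S m t) m (K t)) ->
  sim_dim r m s ->
  (k < m - 1)%nat ->
  r k + r (m - 1)%nat + rmax r m < 1 ->
  s < INR n / 2 ->
  lebesgue_null (fun t => exists x,
     (exists y, K t y /\ x = S k y) /\
     (exists y, K t y /\ x = vadd (S (m - 1)%nat y) t)).
Proof.
  intros HS HK Hsim Hk Hsep Hs.
  assert (Slip : forall j, (j < m)%nat -> is_lip_const (S j) (r j))
    by (intros j Hj; apply HS; auto).
  assert (Hn : 0 < INR n).
  { destruct (sim_dim_exists_pos r m s Hsim) as [j [Hj Hrj]].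
    destruct n; [|apply lt_0_INR; lia].
    pose proof (lip_eq_vec0 _ _ (proj1 (HS j Hj))). lra. }
  destruct (exists_between_pos s (INR n / 2)) as [q [Hq [Hsq Hqn]]]; [lra | lra |].
  destruct (overlap_small_covers n m k S r K Slip HK Hk Hsep s q Hsim Hsq Hq) as [C [D [HC Hcov]]].
  apply (lebesgue_null_of_covers _ C D (2 * q)); auto. lra.
Qed.
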